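(* Let $n$ be an even positive integer, $p\ne 2$ a prime dividing $n$, and $p^a$ the largest power of $p$ dividing $n$. Suppose there is a prime $q$ with $n/3<q<n/2$ and $n-2q<p^a$. Then $n$ satisfies the 3-variation of Condition 1 with $p$, $q$ and any prime that divides $\binom{n}{n/2}$.
   Context: A positive integer $n$ satisfies the $N$-variation of Condition 1 with primes $p_1,\dots,p_N$ if these are $N$ different primes and for every $1\le k\le n-1$, $\binom{n}{k}$ is divisible by at least one of $p_1,\dots,p_N$. *)

From mathcomp Require Import all_boot.
Set Implicit Arguments. Unset Strict Implicit. Unset Printing Implicit Defensive.

Definition cond1_var (n : nat) (ps : seq nat) : Prop :=
  uniq ps /\ all prime ps /\
  forall k, 1 <= k <= n - 1 -> has (fun p => p %| 'C(n, k)) ps.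

From mathcomp Require Import all_boot.
From mathcomp Require Import zify.

(* Write d = p^a.  If d does not divide k then p divides C(n, k), since
   k C(n, k) = n C(n-1, k-1) is a multiple of d.  If d divides k, it also
   divides n - k; by the symmetry C(n, k) = C(n, n-k) we may take k <= n/2,
   and k = n/2 is covered by the third prime.  Otherwise k < n - k are
   distinct multiples of d, so d <= n - 2k, whence n - 2q < d forces k < q,
   while d <= k forces n - k < 2q <= n.  Then q divides the numerator
   n (n-1) ... (n-k+1) of C(n, k) but not the denominator k!. *)

Lemma prime_dvd_fact p k : prime p -> (p %| k`!) = (p <= k).
Proof.
move=> p_pr; apply/idP/idP => [|le_pk]; last by rewrite dvdn_fact ?prime_gt0.
rewrite fact_prod Euclid_dvd_prod // big_has => /hasP[i].
rewrite mem_index_iota.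
by case/andP=> i_gt0 lt_ik /(dvdn_leq i_gt0) le_pi; exact: leq_trans le_pi lt_ik.
Qed.

Lemma prime_dvd_bin_of_pfactor_ndvd p n k :
  prime p -> 0 < k -> ~~ (p ^ logn p n %| k) -> p %| 'C(n, k).
Proof.
move=> p_pr k_gt0 ndvd_k; apply: contraR ndvd_k => ndvd_bin.
have dvd_kbin : p ^ logn p n %| k * 'C(n, k).
  by rewrite -(prednK k_gt0) -mul_bin_diag dvdn_mulr ?pfactor_dvdnn.
by rewrite -(@Gauss_dvdl _ _ 'C(n, k)) // coprimeXl ?prime_coprime.
Qed.

Lemma prime_dvd_bin_of_dvd_window p n k j :
  prime p -> k < p -> p %| j -> n - k < j <= n -> p %| 'C(n, k).
Proof.
move=> p_pr lt_kp dvd_pj /andP[lt_j le_jn].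
have dvd_ffact : p %| n ^_ k.
  rewrite ffact_prod Euclid_dvd_prod // big_has; apply/hasP.
  have lt_i : n - j < k by lia.
  by exists (Ordinal lt_i); rewrite ?mem_index_enum //= subKn.
by move: dvd_ffact; rewrite -bin_ffact Euclid_dvdM // prime_dvd_fact // leqNgt lt_kp orbF.
Qed.

Theorem mainTheorem12 (n p q r : nat) :
  0 < n -> ~~ odd n ->
  prime p -> p != 2 -> p %| n ->
  prime q -> n < 3 * q -> 2 * q < n -> n - 2 * q < p ^ logn p n ->
  prime r -> r %| 'C(n, n./2) -> r != p -> r != q ->
  cond1_var n [:: p; q; r].
Proof.
(* The argument never uses p != 2: the evenness of n alone rules out k = n - k. *)
move=> _ n_even p_pr _ dvd_pn q_pr lt_n3q lt_2qn lt_d r_pr dvd_r r_neqp r_neqq.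
have n_double : n = (n./2).*2 by rewrite -[LHS](odd_double_half n) (negbTE n_even).
have p_neqq : p != q.
  apply/eqP => eq_pq; move: dvd_pn; rewrite eq_pq => /dvdnP[c def_n].
  by move: lt_n3q lt_2qn; rewrite def_n !ltn_pmul2r ?prime_gt0 //; lia.
split; first by rewrite /= !inE negb_or p_neqq eq_sym r_neqp eq_sym r_neqq.
split; first by rewrite /= p_pr q_pr r_pr.
move=> k /andP[k_gt0 le_k_n1].
wlog le_k_nk : k k_gt0 le_k_n1 / k <= n - k.
  move=> Hwlog; case: (leqP k (n - k)) => [|lt_nk_k]; first exact: Hwlog.
  have le_kn : k <= n by lia.
  by rewrite -bin_sub // Hwlog //; lia.
have [-> | k_neq_half] := eqVneq k n./2; first by rewrite /= dvd_r !orbT.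
have lt_k_nk : k < n - k.
  by move: k_neq_half le_k_nk; rewrite {1 3}n_double; lia.
set d := p ^ logn p n in lt_d *.
have [dvd_dk | ndvd_dk] := boolP (d %| k); last first.
  by rewrite /= prime_dvd_bin_of_pfactor_ndvd.
have le_dk : d <= k by apply: dvdn_leq.
have le_d_gap : d <= (n - k) - k.
  apply: dvdn_leq; first by rewrite subn_gt0.
  by rewrite !dvdn_sub ?pfactor_dvdnn.
have lt_kq : k < q by move: lt_d le_d_gap; clear; lia.
have lt_nk_2q : n - k < 2 * q by move: lt_d le_dk le_k_n1; clear; lia.
suff dvd_q : q %| 'C(n, k) by rewrite /= dvd_q orbT.
by apply: (@prime_dvd_bin_of_dvd_window _ _ _ (2 * q)); rewrite ?dvdn_mull // lt_nk_2q ltnW.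
Qed.
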